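(* Let $(X,d_X)$ and $(Y,d_Y)$ be separable metric spaces with $X$ zero-dimensional, and let $\xi$ be a nonzero countable ordinal. A function $f:X\to Y$ is of Baire class $\xi$ if and only if there is a sequence of functions $X\to Y$ converging uniformly to $f$ such that each of them is locally constant on some $\mathbf{\Pi}^0_\xi$-partition of $X$. The same equivalence holds with ''locally constant'' replaced by ''locally Lipschitz'', and also with ''locally constant'' replaced by ''locally continuous''.
   Context: Work in ZF plus countable choice over the reals. $f$ is of Baire class $1$ if $f^{-1}(U)\in\mathbf{\Sigma}^0_2(X)$ for every open $U\subseteq Y$; for $1<\xi<\omega_1$, $f$ is of Baire class $\xi$ if it is the pointwise limit of functions $f_n:X\to Y$ each of Baire class $\xi_n$ for some $1\le\xi_n<\xi$. A $\mathbf{\Pi}^0_\xi$-partition of $X$ is a family $\langle C_n:n<N\rangle$, $1\le N\le\omega$, of nonempty pairwise disjoint sets in $\mathbf{\Pi}^0_\xi(X)$ whose union is $X$. A function $g:X\to Y$ is locally constant (resp. Lipschitz, continuous) on such a partition if there are constant (resp. Lipschitz, continuous) functions $g_n:X\to Y$ with $g\restriction C_n=g_n\restriction C_n$ for all $n<N$. *)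

From Stdlib Require Import Reals.
Open Scope R_scope.

(* Semantics: |OZ| = 0, |OS x| = |x|+1, |OL f| = sup_n |f n|.
   Every countable ordinal is denoted by some tree. *)
Inductive Ord : Type :=
| OZ : Ord
| OS : Ord -> Ord
| OL : (nat -> Ord) -> Ord.

(* ord_le x y  <->  |x| <= |y| ;  ord_lt x y <-> |x| < |y| *)
Fixpoint ord_le (x y : Ord) {struct x} : Prop :=
  match x with
  | OZ => True
  | OS x' =>
      (fix lt' (y : Ord) : Prop :=
         match y with
         | OZ => False
         | OS y' => ord_le x' y'
         | OL g => exists n, lt' (g n)
         end) y
  | OL f => forall n, ord_le (f n) y
  end.

Definition ord_lt (x y : Ord) : Prop := ord_le (OS x) y.

Definition ord_one : Ord := OS OZ.
Definition ord_two : Ord := OS (OS OZ).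

Definition is_metric {X : Type} (d : X -> X -> R) : Prop :=
  (forall x y, d x y = 0 <-> x = y) /\
  (forall x y, d x y = d y x) /\
  (forall x y z, d x z <= d x y + d y z).

(* separable: a countable dense subset (possibly empty, as an option-valued enumeration) *)
Definition separable {X : Type} (d : X -> X -> R) : Prop :=
  exists s : nat -> option X,
    forall x e, 0 < e -> exists n y, s n = Some y /\ d x y < e.

Definition mopen {X : Type} (d : X -> X -> R) (U : X -> Prop) : Prop :=
  forall x, U x -> exists r, 0 < r /\ forall y, d x y < r -> U y.

Definition mclosed {X : Type} (d : X -> X -> R) (F : X -> Prop) : Prop :=
  mopen d (fun x => ~ F x).

Definition zero_dimensional {X : Type} (d : X -> X -> R) : Prop :=
  forall (U : X -> Prop) x, mopen d U -> U x ->
    exists V : X -> Prop, mopen d V /\ mclosed d V /\ V x /\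
      (forall y, V y -> U y).

(* Sigma^0_1 = open sets; for xi > 1, Sigma^0_xi = countable unions of sets in
   Pi^0_eta for some 1 <= eta < xi;  Pi^0_xi = complements of Sigma^0_xi. *)
Inductive Sigma0 {X : Type} (d : X -> X -> R) : Ord -> (X -> Prop) -> Prop :=
| Sigma0_open (xi : Ord) (A : X -> Prop) :
    ord_lt OZ xi -> ord_le xi ord_one -> mopen d A -> Sigma0 d xi A
| Sigma0_union (xi : Ord) (eta : nat -> Ord) (B : nat -> X -> Prop) :
    (forall n, ord_lt OZ (eta n)) -> (forall n, ord_lt (eta n) xi) ->
    (forall n, Sigma0 d (eta n) (B n)) ->
    Sigma0 d xi (fun x => exists n, ~ B n x).

Definition Pi0 {X : Type} (d : X -> X -> R) (xi : Ord) (A : X -> Prop) : Prop :=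
  Sigma0 d xi (fun x => ~ A x).

Definition pointwise_cv {X Y : Type} (dY : Y -> Y -> R)
  (fn : nat -> X -> Y) (f : X -> Y) : Prop :=
  forall x e, 0 < e -> exists N, forall n, (N <= n)%nat -> dY (fn n x) (f x) < e.

Definition uniform_cv {X Y : Type} (dY : Y -> Y -> R)
  (fn : nat -> X -> Y) (f : X -> Y) : Prop :=
  forall e, 0 < e -> exists N, forall n, (N <= n)%nat -> forall x, dY (fn n x) (f x) < e.

Inductive BaireClass {X Y : Type} (dX : X -> X -> R) (dY : Y -> Y -> R) :
  Ord -> (X -> Y) -> Prop :=
| Baire_one (xi : Ord) (f : X -> Y) :
    ord_lt OZ xi -> ord_le xi ord_one ->
    (forall U, mopen dY U -> Sigma0 dX ord_two (fun x => U (f x))) ->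
    BaireClass dX dY xi f
| Baire_lim (xi : Ord) (eta : nat -> Ord) (fn : nat -> X -> Y) (f : X -> Y) :
    ord_lt ord_one xi ->
    (forall n, ord_lt OZ (eta n)) -> (forall n, ord_lt (eta n) xi) ->
    (forall n, BaireClass dX dY (eta n) (fn n)) ->
    pointwise_cv dY fn f ->
    BaireClass dX dY xi f.

(* A family <C_n : n < N>, 1 <= N <= omega; N = None encodes omega. *)
Definition in_index (N : option nat) (n : nat) : Prop :=
  match N with Some k => (n < k)%nat | None => True end.

Definition Pi_partition {X : Type} (dX : X -> X -> R) (xi : Ord)
  (N : option nat) (C : nat -> X -> Prop) : Prop :=
  in_index N 0 /\
  (forall n, in_index N n -> exists x, C n x) /\
  (forall n, in_index N n -> Pi0 dX xi (C n)) /\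
  (forall n m x, in_index N n -> in_index N m -> C n x -> C m x -> n = m) /\
  (forall x, exists n, in_index N n /\ C n x).

Definition is_constant {X Y : Type} (g : X -> Y) : Prop :=
  exists y, forall x, g x = y.

Definition is_lipschitz {X Y : Type} (dX : X -> X -> R) (dY : Y -> Y -> R)
  (g : X -> Y) : Prop :=
  exists L, 0 <= L /\ forall x x', dY (g x) (g x') <= L * dX x x'.

Definition is_continuous {X Y : Type} (dX : X -> X -> R) (dY : Y -> Y -> R)
  (g : X -> Y) : Prop :=
  forall x e, 0 < e -> exists r, 0 < r /\
    forall x', dX x x' < r -> dY (g x) (g x') < e.

Definition locally_on {X Y : Type} (P : (X -> Y) -> Prop)
  (N : option nat) (C : nat -> X -> Prop) (g : X -> Y) : Prop :=
  exists gn : nat -> X -> Y,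
    forall n, in_index N n -> P (gn n) /\ forall x, C n x -> g x = gn n x.

Definition unif_limit_piecewise {X Y : Type} (dX : X -> X -> R) (dY : Y -> Y -> R)
  (xi : Ord) (P : (X -> Y) -> Prop) (f : X -> Y) : Prop :=
  exists fk : nat -> X -> Y,
    uniform_cv dY fk f /\
    forall k, exists N C, Pi_partition dX xi N C /\ locally_on P N C (fk k).

(* A function is of Baire class xi iff preimages of open sets are Sigma^0_(xi+1)
   (Lebesgue-Hausdorff); zero-dimensionality is what makes every Sigma^0_xi set a disjoint
   union of Pi^0_xi sets. For such f, pulling back a countable cover of Y by eps-balls and
   disjointifying gives a Pi^0_xi partition on whose pieces f oscillates by less than eps, so f
   is a uniform limit of functions constant on the pieces of Pi^0_xi partitions. Conversely,
   functions continuous on the pieces of a Pi^0_xi partition are Sigma^0_(xi+1)-measurable,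
   and uniform limits preserve this.
   For the implication from measurability to Baire class xi > 1, the partitions for eps = 1/(k+1)
   are refined into a tree of Pi^0_xi cells, each cell is approximated from outside by
   Sigma^0_theta sets with theta < xi, and x is sent down the tree along these approximations.
   After m steps this gives a function with Delta^0_(theta_m+1) fibres, of Baire class
   theta_m < xi by induction; these functions converge pointwise to f because x eventually
   follows its own branch to any given depth. *)

From Stdlib Require Import Reals Lra Lia Classical ClassicalDescription ClassicalEpsilon
  FunctionalExtensionality PropExtensionality Cantor Wf_nat Compare_dec.
Open Scope R_scope.

Fixpoint ord_ltr (x y : Ord) {struct y} : Prop :=
  match y with
  | OZ => False
  | OS y' => ord_le x y'
  | OL g => exists n, ord_ltr x (g n)
  end.

Lemma ord_le_OS (x y : Ord) : ord_le (OS x) y = ord_ltr x y.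
Proof.
  induction y as [| |g IH]; simpl; auto.
  f_equal; apply functional_extensionality; intro n.
  apply propositional_extensionality; rewrite <- IH; tauto.
Qed.

Lemma ord_ltP (x y : Ord) : ord_lt x y <-> ord_ltr x y.
Proof. unfold ord_lt; rewrite ord_le_OS; tauto. Qed.

Lemma ord_le_OL (x : Ord) (g : nat -> Ord) (n : nat) : ord_le x (g n) -> ord_le x (OL g).
Proof.
  revert g n; induction x as [|x IH|f IH]; intros g n H.
  - exact I.
  - rewrite ord_le_OS in *; simpl; eauto.
  - intro m; eapply IH; apply H.
Qed.

Lemma ord_le_OSr_of_ltr_le (y : Ord) :
  (forall x, ord_ltr x y -> ord_le x y) -> forall x, ord_le x y -> ord_le x (OS y).
Proof.
  intros Hlt x; induction x as [|x IHx|f IHx]; intro H.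
  - exact I.
  - rewrite ord_le_OS in *; exact (Hlt x H).
  - intro n; apply IHx, H.
Qed.

Lemma ord_ltr_le (x y : Ord) : ord_ltr x y -> ord_le x y.
Proof.
  revert x; induction y as [|y IH|g IH]; simpl.
  - tauto.
  - exact (ord_le_OSr_of_ltr_le y IH).
  - intros x [n H]; apply ord_le_OL with n, IH, H.
Qed.

Lemma ord_le_refl (x : Ord) : ord_le x x.
Proof.
  induction x as [|x IH|f IH].
  - exact I.
  - rewrite ord_le_OS; exact IH.
  - intro n; apply ord_le_OL with n, IH.
Qed.

Lemma ord_le_trans (x y z : Ord) : ord_le x y -> ord_le y z -> ord_le x z.
Proof.
  revert y z; induction x as [|x IH|f IH]; intros y z H1 H2.
  - exact I.
  - rewrite ord_le_OS in *.
    assert (K : forall y z, ord_le x y -> ord_ltr y z -> ord_ltr x z).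
    { intros y' z'; induction z' as [|z' _|g IHz]; simpl; intros A B.
      - exact B.
      - eauto.
      - destruct B as [n B]; exists n; eauto. }
    revert z H1 H2; induction y as [|y _|g IHy]; intros z H1 H2; simpl in H1.
    + contradiction.
    + rewrite ord_le_OS in H2; eauto.
    + destruct H1 as [n H1]; eauto.
  - intro n; eapply IH; [apply H1 | exact H2].
Qed.

Lemma ord_lt_le (x y : Ord) : ord_lt x y -> ord_le x y.
Proof. rewrite ord_ltP; apply ord_ltr_le. Qed.

Lemma ord_lt_le_trans (x y z : Ord) : ord_lt x y -> ord_le y z -> ord_lt x z.
Proof. apply ord_le_trans. Qed.

Lemma ord_lt_trans (x y z : Ord) : ord_lt x y -> ord_lt y z -> ord_lt x z.
Proof. intros A B; apply ord_lt_le_trans with y; auto using ord_lt_le. Qed.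

Lemma ord_lt_OS (x : Ord) : ord_lt x (OS x).
Proof. apply ord_ltP, ord_le_refl. Qed.

Lemma ord_le_OS_mono (x y : Ord) : ord_le x y -> ord_le (OS x) (OS y).
Proof. now rewrite ord_le_OS. Qed.

Lemma ord_le_or_lt (x y : Ord) : ord_le x y \/ ord_lt y x.
Proof.
  revert y; induction x as [|x IH|f IH]; intro y.
  - left; exact I.
  - rewrite ord_le_OS, ord_ltP.
    induction y as [|y _|g IHy].
    + right; exact I.
    + destruct (IH y) as [A|A]; [left | right]; exact A.
    + destruct (classic (exists n, ord_ltr x (g n))) as [A|A]; [left; exact A|].
      right; intro n; destruct (IHy n) as [B|B]; [exfalso; eauto | exact B].
  - destruct (classic (forall n, ord_le (f n) y)) as [A|A]; [left; exact A|].
    apply not_all_ex_not in A as [n A].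
    destruct (IH n y) as [B|B]; [contradiction|].
    right; apply ord_ltP; apply ord_ltP in B; simpl; eauto.
Qed.

Lemma ord_lt_wf : well_founded ord_lt.
Proof.
  assert (K : forall x y, ord_le y x -> Acc ord_lt y).
  { induction x as [|x IH|f IH]; intros y Hy; constructor; intros z Hz;
      pose proof (ord_le_trans _ _ _ Hz Hy) as H; rewrite ord_le_OS in H; simpl in H.
    - contradiction.
    - eauto.
    - destruct H as [n H]; apply (IH n), ord_ltr_le, H. }
  intro x; exact (K x x (ord_le_refl x)).
Qed.

Lemma ord_lt_upper_bound (xi b : Ord) (h : nat -> Ord) (m : nat) :
  ord_lt b xi -> (forall i, ord_lt (h i) xi) ->
  exists c, ord_lt c xi /\ ord_le b c /\ forall i, (i <= m)%nat -> ord_le (h i) c.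
Proof.
  intros Hb Hh; induction m as [|m IH].
  - destruct (ord_le_or_lt (h 0%nat) b) as [A|A].
    + exists b; repeat split; auto using ord_le_refl.
      intros i Hi; replace i with 0%nat by lia; exact A.
    + exists (h 0%nat); repeat split; auto using ord_lt_le.
      intros i Hi; replace i with 0%nat by lia; apply ord_le_refl.
  - destruct IH as [c [Hc [Hbc Hic]]].
    destruct (ord_le_or_lt (h (S m)) c) as [A|A].
    + exists c; repeat split; auto.
      intros i Hi; destruct (Nat.eq_dec i (S m)) as [->|]; auto; apply Hic; lia.
    + exists (h (S m)); repeat split; auto.
      * apply ord_le_trans with c; auto using ord_lt_le.
      * intros i Hi; destruct (Nat.eq_dec i (S m)) as [->|]; [apply ord_le_refl|].
        apply ord_le_trans with c; [apply Hic; lia | apply ord_lt_le, A].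
Qed.

Lemma ord_lt0_one : ord_lt OZ ord_one.
Proof. apply ord_lt_OS. Qed.

Lemma ord_lt_one_pos (eta xi : Ord) :
  ord_lt OZ eta -> ord_lt eta xi -> ~ ord_le xi ord_one.
Proof.
  intros A B C; pose proof (ord_le_trans _ _ _ B C) as H.
  unfold ord_one in H; rewrite ord_le_OS in H; simpl in H.
  pose proof (ord_le_trans _ _ _ A H) as H'; rewrite ord_le_OS in H'; exact H'.
Qed.

Lemma cantor_of_nat_surj (p : nat * nat) : exists k, Cantor.of_nat k = p.
Proof. exists (Cantor.to_nat p); apply Cantor.cancel_of_to. Qed.

Lemma inv_INR_S_pos (k : nat) : 0 < / INR (S k).
Proof. apply Rinv_0_lt_compat, lt_0_INR; lia. Qed.

Lemma inv_INR_S_le (n m : nat) : (n <= m)%nat -> / INR (S m) <= / INR (S n).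
Proof. intro H; apply Rinv_le_contravar; [apply lt_0_INR; lia | apply le_INR; lia]. Qed.

Lemma inv_INR_S_lt (r : R) : 0 < r -> exists k : nat, / INR (S k) < r.
Proof.
  intro Hr; destruct (archimed_cor1 r Hr) as [[|k] [Hk Hpos]]; [lia|].
  exists k; exact Hk.
Qed.

Definition ball_in {X : Type} (d : X -> X -> R) (A : X -> Prop) (k : nat) (x : X) : Prop :=
  forall y, d x y < / INR (S k) -> A y.

(* Lets the metric axioms be supplied by instance resolution. *)
Existing Class is_metric.

Section Borel.
Context {X : Type} {d : X -> X -> R} {Hd : is_metric d}.

Lemma metric_eq0 (x y : X) : d x y = 0 <-> x = y.
Proof. apply Hd. Qed.

Lemma metric_refl (x : X) : d x x = 0.
Proof. apply metric_eq0; reflexivity. Qed.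

Lemma metric_sym (x y : X) : d x y = d y x.
Proof. apply Hd. Qed.

Lemma metric_triangle (x y z : X) : d x z <= d x y + d y z.
Proof. apply Hd. Qed.

Lemma metric_ge0 (x y : X) : 0 <= d x y.
Proof.
  pose proof (metric_triangle x y x) as H; rewrite metric_refl, (metric_sym y x) in H; lra.
Qed.

Lemma Sigma0_ext (xi : Ord) (A B : X -> Prop) :
  Sigma0 d xi A -> (forall x, A x <-> B x) -> Sigma0 d xi B.
Proof.
  intros H E; replace B with A; auto.
  apply functional_extensionality; intro x; apply propositional_extensionality, E.
Qed.

Lemma ball_in_closed (A : X -> Prop) (k : nat) : mclosed d (ball_in d A k).
Proof.
  intros x Hx; apply not_all_ex_not in Hx as [y Hy].
  apply imply_to_and in Hy as [Hxy Hy].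
  exists (/ INR (S k) - d x y); split; [lra|].
  intros z Hz Hi; apply Hy, Hi.
  pose proof (metric_triangle z x y); rewrite (metric_sym z x) in *; lra.
Qed.

Lemma open_ball_in (A : X -> Prop) : mopen d A -> forall x, A x <-> exists k, ball_in d A k x.
Proof.
  intros HA x; split.
  - intro Ax; destruct (HA x Ax) as [r [Hr H]]; destruct (inv_INR_S_lt r Hr) as [k Hk].
    exists k; intros y Hy; apply H; lra.
  - intros [k Hk]; apply Hk; rewrite metric_refl; apply inv_INR_S_pos.
Qed.

Lemma Sigma0_of_open (xi : Ord) (A : X -> Prop) :
  ord_lt OZ xi -> mopen d A -> Sigma0 d xi A.
Proof.
  intros Hxi HA; destruct (ord_le_or_lt xi ord_one) as [C|C].
  - apply Sigma0_open; auto.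
  - apply Sigma0_ext with (fun x => exists k, ~ (fun k x => ~ ball_in d A k x) k x).
    + apply Sigma0_union with (eta := fun _ => ord_one); intro k; auto using ord_lt0_one.
      apply Sigma0_open; [apply ord_lt0_one | apply ord_le_refl | apply ball_in_closed].
    + intro x; rewrite (open_ball_in A HA x); split; intros [k Hk]; exists k; tauto.
Qed.

Lemma Sigma0_pos (xi : Ord) (A : X -> Prop) : Sigma0 d xi A -> ord_lt OZ xi.
Proof.
  destruct 1 as [xi A H _ _ | xi eta B H1 H2 _]; auto.
  apply ord_lt_trans with (eta 0%nat); auto.
Qed.

Lemma Sigma0_le_one_open (xi : Ord) (A : X -> Prop) :
  ord_le xi ord_one -> Sigma0 d xi A -> mopen d A.
Proof.
  intros C; destruct 1 as [xi A _ _ HA | xi eta B H1 H2 _]; auto.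
  exfalso; exact (ord_lt_one_pos (eta 0%nat) xi (H1 _) (H2 _) C).
Qed.

Lemma Sigma0_inv (xi : Ord) (A : X -> Prop) : ord_lt ord_one xi -> Sigma0 d xi A ->
  exists (eta : nat -> Ord) (B : nat -> X -> Prop),
    (forall n, ord_lt OZ (eta n) /\ ord_lt (eta n) xi) /\
    (forall n, Sigma0 d (eta n) (B n)) /\ forall x, A x <-> exists n, ~ B n x.
Proof.
  intros C; destruct 1 as [xi A _ H2 _ | xi eta B H1 H2 H3].
  - exfalso; pose proof (ord_le_trans _ _ _ C H2) as K; exact K.
  - exists eta, B; repeat split; auto; tauto.
Qed.

Lemma Sigma0_mono (xi xi' : Ord) (A : X -> Prop) :
  Sigma0 d xi A -> ord_le xi xi' -> Sigma0 d xi' A.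
Proof.
  intros H L; pose proof (Sigma0_pos _ _ H) as P.
  destruct H as [xi A _ _ HA | xi eta B H1 H2 H3].
  - apply Sigma0_of_open; auto; apply ord_lt_le_trans with xi; auto.
  - apply Sigma0_union with eta; auto; intro n; apply ord_lt_le_trans with xi; auto.
Qed.

Lemma Sigma0_countable_union (xi : Ord) (A : nat -> X -> Prop) :
  ord_lt OZ xi -> (forall n, Sigma0 d xi (A n)) -> Sigma0 d xi (fun x => exists n, A n x).
Proof.
  intros P H; destruct (ord_le_or_lt xi ord_one) as [C|C].
  - apply Sigma0_of_open; auto.
    intros x [n Hn]; destruct (Sigma0_le_one_open _ _ C (H n) x Hn) as [r [Hr Hr']].
    exists r; split; eauto.
  - destruct (choice (fun n (p : (nat -> Ord) * (nat -> X -> Prop)) =>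
       (forall m, ord_lt OZ (fst p m) /\ ord_lt (fst p m) xi) /\
       (forall m, Sigma0 d (fst p m) (snd p m)) /\ forall x, A n x <-> exists m, ~ snd p m x))
      as [F HF].
    { intro n; destruct (Sigma0_inv _ _ C (H n)) as [eta [B HB]]; exists (eta, B); exact HB. }
    set (code k := F (fst (Cantor.of_nat k))).
    apply Sigma0_ext with
      (fun x => exists k, ~ (fun k => snd (code k) (snd (Cantor.of_nat k))) k x).
    + apply Sigma0_union with (eta := fun k => fst (code k) (snd (Cantor.of_nat k)));
        intro k; apply HF.
    + intro x; split.
      * intros [k Hk]; exists (fst (Cantor.of_nat k)); apply HF; eauto.
      * intros [n Hn]; apply HF in Hn as [m Hm].
        destruct (cantor_of_nat_surj (n, m)) as [k Hk]; exists k.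
        unfold code; rewrite Hk; exact Hm.
Qed.

Lemma Sigma0_union2 (xi : Ord) (A B : X -> Prop) :
  Sigma0 d xi A -> Sigma0 d xi B -> Sigma0 d xi (fun x => A x \/ B x).
Proof.
  intros HA HB.
  apply Sigma0_ext with (fun x => exists n, (fun n => match n with O => A | _ => B end) n x).
  - apply Sigma0_countable_union; [exact (Sigma0_pos _ _ HA)|]; intros [|n]; auto.
  - intro x; split.
    + intros [[|n] H]; auto.
    + intros [H|H]; [exists O | exists 1%nat]; auto.
Qed.

Lemma Sigma0_empty (xi : Ord) : ord_lt OZ xi -> Sigma0 d xi (fun _ => False).
Proof. intro P; apply Sigma0_of_open; auto; intros x []. Qed.

Lemma Sigma0_full (xi : Ord) : ord_lt OZ xi -> Sigma0 d xi (fun _ => True).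
Proof. intro P; apply Sigma0_of_open; auto; intros x _; exists 1; split; [lra | auto]. Qed.

Lemma Sigma0_const (xi : Ord) (Q : Prop) : ord_lt OZ xi -> Sigma0 d xi (fun _ => Q).
Proof.
  intro P; destruct (classic Q) as [q|q];
    [apply Sigma0_ext with (fun _ => True) | apply Sigma0_ext with (fun _ => False)];
    auto using Sigma0_full, Sigma0_empty; intro; tauto.
Qed.

Lemma mopen_inter2 (A B : X -> Prop) :
  mopen d A -> mopen d B -> mopen d (fun x => A x /\ B x).
Proof.
  intros HA HB x [Ax Bx].
  destruct (HA x Ax) as [r1 [H1 H1']], (HB x Bx) as [r2 [H2 H2']].
  exists (Rmin r1 r2); split; [apply Rmin_pos; auto|].
  intros y Hy; pose proof (Rmin_l r1 r2); pose proof (Rmin_r r1 r2).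
  split; [apply H1' | apply H2']; lra.
Qed.

Lemma Sigma0_inter2 (xi : Ord) (A B : X -> Prop) :
  Sigma0 d xi A -> Sigma0 d xi B -> Sigma0 d xi (fun x => A x /\ B x).
Proof.
  intros HA HB; pose proof (Sigma0_pos _ _ HA) as P.
  destruct (ord_le_or_lt xi ord_one) as [C|C].
  - apply Sigma0_of_open, mopen_inter2; eauto using Sigma0_le_one_open.
  - destruct (Sigma0_inv _ _ C HA) as [e1 [B1 [E1 [S1 Q1]]]].
    destruct (Sigma0_inv _ _ C HB) as [e2 [B2 [E2 [S2 Q2]]]].
    set (U k x := B1 (fst (Cantor.of_nat k)) x \/ B2 (snd (Cantor.of_nat k)) x).
    destruct (choice (fun k c => ord_lt OZ c /\ ord_lt c xi /\ Sigma0 d c (U k)))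
      as [c Hc].
    { intro k; destruct (ord_le_or_lt (e1 (fst (Cantor.of_nat k))) (e2 (snd (Cantor.of_nat k))))
        as [L|L]; [exists (e2 (snd (Cantor.of_nat k))) | exists (e1 (fst (Cantor.of_nat k)))];
        repeat split; try apply E1; try apply E2;
        apply Sigma0_union2; eauto using Sigma0_mono, ord_lt_le. }
    apply Sigma0_ext with (fun x => exists k, ~ U k x).
    + apply Sigma0_union with c; intro k; apply Hc.
    + intro x; rewrite Q1, Q2; unfold U; split.
      * intros [k Hk]; split;
          [exists (fst (Cantor.of_nat k)) | exists (snd (Cantor.of_nat k))]; tauto.
      * intros [[n Hn] [m Hm]]; destruct (cantor_of_nat_surj (n, m)) as [k Hk].
        exists k; rewrite Hk; simpl; tauto.
Qed.

Lemma Sigma0_finite_inter (xi : Ord) (G : nat -> X -> Prop) (m : nat) :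
  ord_lt OZ xi -> (forall i, (i <= m)%nat -> Sigma0 d xi (G i)) ->
  Sigma0 d xi (fun x => forall i, (i <= m)%nat -> G i x).
Proof.
  intro P; induction m as [|m IH]; intro H.
  - apply Sigma0_ext with (G 0%nat); [apply H; lia|].
    intro x; split; [intros Hx i Hi; replace i with 0%nat by lia; auto | intro Hx; apply Hx; lia].
  - apply Sigma0_ext with (fun x => (forall i, (i <= m)%nat -> G i x) /\ G (S m) x).
    + apply Sigma0_inter2; [apply IH; intros; apply H|apply H]; lia.
    + intro x; split.
      * intros [H1 H2] i Hi; destruct (Nat.eq_dec i (S m)) as [->|]; auto; apply H1; lia.
      * intro Hx; split; auto.
Qed.

Lemma Pi0_ext (xi : Ord) (A B : X -> Prop) :
  Pi0 d xi A -> (forall x, A x <-> B x) -> Pi0 d xi B.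
Proof. intros H E; eapply Sigma0_ext; [exact H|]; intro x; simpl; rewrite E; tauto. Qed.

Lemma Pi0_mono (xi xi' : Ord) (A : X -> Prop) : Pi0 d xi A -> ord_le xi xi' -> Pi0 d xi' A.
Proof. apply Sigma0_mono. Qed.

Lemma Pi0_countable_inter (xi : Ord) (A : nat -> X -> Prop) :
  ord_lt OZ xi -> (forall n, Pi0 d xi (A n)) -> Pi0 d xi (fun x => forall n, A n x).
Proof.
  intros P H; eapply Sigma0_ext; [apply (Sigma0_countable_union xi (fun n x => ~ A n x)); auto|].
  intro x; split; [intros [n Hn] C; auto | apply not_all_ex_not].
Qed.

Lemma Pi0_inter2 (xi : Ord) (A B : X -> Prop) :
  Pi0 d xi A -> Pi0 d xi B -> Pi0 d xi (fun x => A x /\ B x).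
Proof.
  intros HA HB; eapply Sigma0_ext; [exact (Sigma0_union2 _ _ _ HA HB)|]; intro x; tauto.
Qed.

Lemma Pi0_const (xi : Ord) (Q : Prop) : ord_lt OZ xi -> Pi0 d xi (fun _ => Q).
Proof. intro P; apply (Sigma0_const xi (~ Q) P). Qed.

Lemma Pi0_of_closed (xi : Ord) (A : X -> Prop) : ord_lt OZ xi -> mclosed d A -> Pi0 d xi A.
Proof. apply Sigma0_of_open. Qed.

Lemma Sigma0_OS_of_Pi0 (xi : Ord) (A : X -> Prop) :
  ord_lt OZ xi -> Pi0 d xi A -> Sigma0 d (OS xi) A.
Proof.
  intros P H; eapply Sigma0_ext.
  - apply (Sigma0_union d (OS xi) (fun _ => xi) (fun _ x => ~ A x)); auto using ord_lt_OS.
  - intro x; split; [intros [_ H']; tauto | intro; exists O; tauto].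
Qed.

Lemma Sigma0_OS_inv (xi : Ord) (A : X -> Prop) : ord_lt OZ xi -> Sigma0 d (OS xi) A ->
  exists B : nat -> X -> Prop, (forall n, Pi0 d xi (B n)) /\ forall x, A x <-> exists n, B n x.
Proof.
  intros P H.
  destruct (Sigma0_inv _ _ (ord_le_OS_mono _ _ P) H) as [eta [B [E [S Q]]]].
  exists (fun n x => ~ B n x); split; [|exact Q].
  intro n; eapply Sigma0_ext.
  - apply Sigma0_mono with (eta n); [apply S|]; exact (proj1 (ord_ltP _ _) (proj2 (E n))).
  - intro x; tauto.
Qed.

Lemma Sigma0_OS_union (xi : Ord) (B : nat -> X -> Prop) :
  ord_lt OZ xi -> (forall n, Pi0 d xi (B n)) -> Sigma0 d (OS xi) (fun x => exists n, B n x).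
Proof.
  intros P H; apply Sigma0_countable_union; [apply ord_lt_trans with xi; auto using ord_lt_OS|].
  intro n; apply Sigma0_OS_of_Pi0; auto.
Qed.

End Borel.

Lemma nat_least_witness (P : nat -> Prop) :
  (exists n, P n) -> exists n, P n /\ forall m, (m < n)%nat -> ~ P m.
Proof.
  intros [n Hn]; induction n as [n IH] using (well_founded_induction lt_wf).
  destruct (classic (exists m, (m < n)%nat /\ P m)) as [[m [Hm Pm]]|H].
  - exact (IH m Hm Pm).
  - exists n; split; auto; intros m Hm Pm; apply H; eauto.
Qed.

Definition disjointify {X : Type} (Q : nat -> X -> Prop) (j : nat) (x : X) : Prop :=
  Q j x /\ forall i, (i < j)%nat -> ~ Q i x.

Lemma disjointify_cover {X : Type} (Q : nat -> X -> Prop) (x : X) :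
  (exists j, Q j x) <-> exists j, disjointify Q j x.
Proof.
  split; [apply (nat_least_witness (fun j => Q j x)) | intros [j [H _]]; eauto].
Qed.

Lemma disjointify_disjoint {X : Type} (Q : nat -> X -> Prop) (j j' : nat) (x : X) :
  disjointify Q j x -> disjointify Q j' x -> j = j'.
Proof.
  intros [H1 H2] [H3 H4]; destruct (lt_eq_lt_dec j j') as [[L|L]|L]; auto.
  - exfalso; exact (H4 j L H1).
  - exfalso; exact (H2 j' L H3).
Qed.

Definition Pi0_decomposition {X : Type} (d : X -> X -> R) (xi : Ord) (E : nat -> X -> Prop) :=
  (forall n, Pi0 d xi (E n)) /\ (forall x, exists n, E n x) /\
  (forall n m x, E n x -> E m x -> n = m).

Section Disjoint.
Context {X : Type} {d : X -> X -> R} {Hd : is_metric d}.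

Lemma Pi0_guard (xi : Ord) (P : Prop) (A : X -> Prop) :
  ord_lt OZ xi -> Pi0 d xi A -> Pi0 d xi (fun x => P -> A x).
Proof.
  intros Hxi HA; destruct (classic P) as [p|p].
  - apply Pi0_ext with A; auto; intro x; tauto.
  - apply Pi0_ext with (fun _ => True); auto using Pi0_const; intro x; tauto.
Qed.

Lemma Sigma0_guard (xi : Ord) (P : Prop) (A : X -> Prop) :
  ord_lt OZ xi -> Sigma0 d xi A -> Sigma0 d xi (fun x => P -> A x).
Proof.
  intros Hxi HA; destruct (classic P) as [p|p].
  - apply Sigma0_ext with A; auto; intro x; tauto.
  - apply Sigma0_ext with (fun _ => True); auto using Sigma0_full; intro x; tauto.
Qed.

Lemma disjointify_Pi0 (xi : Ord) (Q : nat -> X -> Prop) :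
  (forall j, Pi0 d xi (Q j)) -> (forall j, Sigma0 d xi (Q j)) ->
  forall j, Pi0 d xi (disjointify Q j).
Proof.
  intros HP HS j; pose proof (Sigma0_pos _ _ (HS j)) as Hxi.
  apply Pi0_inter2; [apply HP|].
  apply Pi0_countable_inter; auto; intro i; apply Pi0_guard; auto.
  apply Sigma0_ext with (Q i); [apply HS | intro x; tauto].
Qed.

Lemma open_clopen_union (A : X -> Prop) :
  separable d -> zero_dimensional d -> mopen d A ->
  exists V : nat -> X -> Prop, (forall p, mopen d (V p) /\ mclosed d (V p)) /\
    forall x, A x <-> exists p, V p x.
Proof.
  intros [s Hs] Hz HA.
  set (ball p y := exists z, s (fst (Cantor.of_nat p)) = Some z /\
                             d z y < / INR (S (snd (Cantor.of_nat p)))).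
  set (good p V := mopen d V /\ mclosed d V /\ (forall y, V y -> A y) /\
                   forall y, ball p y -> V y).
  destruct (choice (fun p V => mopen d V /\ mclosed d V /\ (forall y, V y -> A y) /\
                               ((exists V', good p V') -> good p V))) as [V HV].
  { intro p; destruct (classic (exists V', good p V')) as [[V' HV']|N].
    - exists V'; repeat split; try apply HV'; intros _; exact HV'.
    - exists (fun _ => False); repeat split; try tauto.
      + intros x [].
      + intros x _; exists 1; split; [lra | tauto]. }
  exists V; split; [intro p; split; [exact (proj1 (HV p)) | exact (proj1 (proj2 (HV p)))]|].
  intro x; split; [|intros [p Hp]; exact (proj1 (proj2 (proj2 (HV p))) x Hp)].
  intro Ax; destruct (Hz A x HA Ax) as [U [Uo [Uc [Ux UA]]]].
  destruct (Uo x Ux) as [r [Hr Hr']].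
  destruct (inv_INR_S_lt (r / 2)) as [k Hk]; [lra|].
  destruct (Hs x (/ INR (S k)) (inv_INR_S_pos k)) as [n [z [Hz1 Hz2]]].
  destruct (cantor_of_nat_surj (n, k)) as [p Hp].
  assert (Hball : forall y, ball p y -> U y).
  { intros y [z' [E1 E2]]; rewrite Hp in E1, E2; cbn [fst snd] in E1, E2.
    rewrite Hz1 in E1; injection E1 as <-; apply Hr'.
    pose proof (metric_triangle x z y); lra. }
  assert (Hgood : good p (V p)) by (apply (HV p); exists U; repeat split; auto).
  exists p; apply Hgood.
  exists z; rewrite Hp; cbn [fst snd]; rewrite metric_sym; auto.
Qed.

Lemma Sigma0_Delta0_union (xi : Ord) (A : X -> Prop) :
  separable d -> zero_dimensional d -> Sigma0 d xi A ->
  exists Q : nat -> X -> Prop, (forall j, Pi0 d xi (Q j) /\ Sigma0 d xi (Q j)) /\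
    forall x, A x <-> exists j, Q j x.
Proof.
  intros Hs Hz HA; pose proof (Sigma0_pos _ _ HA) as Hxi.
  destruct (ord_le_or_lt xi ord_one) as [C|C].
  - destruct (open_clopen_union A Hs Hz (Sigma0_le_one_open _ _ C HA)) as [V [HV HAV]].
    exists V; split; auto; intro j; split;
      [apply Pi0_of_closed | apply Sigma0_of_open]; auto; apply HV.
  - destruct (Sigma0_inv _ _ C HA) as [eta [B [E [SB Q]]]].
    exists (fun n x => ~ B n x); split; auto; intro j; split.
    + apply Pi0_mono with (eta j); [|apply ord_lt_le, E].
      apply Sigma0_ext with (B j); [apply SB | intro x; tauto].
    + apply Sigma0_mono with (OS (eta j)); [|apply E].
      apply Sigma0_OS_of_Pi0; [apply E|].
      apply Sigma0_ext with (B j); [apply SB | intro x; tauto].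
Qed.

Lemma Sigma0_disjoint_Pi0_union (xi : Ord) (A : X -> Prop) :
  separable d -> zero_dimensional d -> Sigma0 d xi A ->
  exists T : nat -> X -> Prop, (forall j, Pi0 d xi (T j)) /\
    (forall x, A x <-> exists j, T j x) /\ (forall j j' x, T j x -> T j' x -> j = j').
Proof.
  intros Hs Hz HA; destruct (Sigma0_Delta0_union xi A Hs Hz HA) as [Q [HQ HAQ]].
  exists (disjointify Q); split; [|split].
  - apply disjointify_Pi0; apply HQ.
  - intro x; rewrite HAQ; apply disjointify_cover.
  - intros j j' x; apply disjointify_disjoint.
Qed.

Lemma Pi0_cover_refine (xi : Ord) (Q : nat -> X -> Prop) :
  separable d -> zero_dimensional d -> ord_lt OZ xi ->
  (forall k, Pi0 d xi (Q k)) -> (forall x, exists k, Q k x) ->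
  exists E, Pi0_decomposition d xi E /\ forall n, exists k, forall x, E n x -> Q k x.
Proof.
  intros Hs Hz Hxi HQ Hcov.
  destruct (choice (fun k (T : nat -> X -> Prop) => (forall j, Pi0 d xi (T j)) /\
      (forall x, (forall i, (i < k)%nat -> ~ Q i x) <-> exists j, T j x) /\
      (forall j j' x, T j x -> T j' x -> j = j'))) as [T HT].
  { intro k; apply Sigma0_disjoint_Pi0_union; auto.
    apply Sigma0_ext with (fun x => forall i, (i <= k)%nat -> (i < k)%nat -> ~ Q i x).
    - apply Sigma0_finite_inter; auto; intros i _; apply Sigma0_guard, HQ; auto.
    - intro x; split; auto; intros H i Hi; apply H; lia. }
  set (E p x := Q (fst (Cantor.of_nat p)) x /\
                T (fst (Cantor.of_nat p)) (snd (Cantor.of_nat p)) x).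
  assert (Edisj : forall p x, E p x -> disjointify Q (fst (Cantor.of_nat p)) x).
  { intros p x [Qx Tx]; split; auto; apply (proj2 (proj1 (proj2 (HT _)) x)); eauto. }
  exists E; split; [repeat split|].
  - intro p; apply Pi0_inter2; apply HQ || apply HT.
  - intro x; destruct (proj1 (disjointify_cover Q x) (Hcov x)) as [k [Qx Hk]].
    destruct (proj1 (proj1 (proj2 (HT k)) x) Hk) as [j Hj].
    destruct (cantor_of_nat_surj (k, j)) as [p Hp].
    exists p; unfold E; rewrite Hp; simpl; auto.
  - intros p q x Ep Eq.
    pose proof (disjointify_disjoint _ _ _ _ (Edisj p x Ep) (Edisj q x Eq)) as Ek.
    destruct Ep as [_ Tp], Eq as [_ Tq]; rewrite Ek in Tp.
    apply Cantor.of_nat_inj.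
    rewrite (surjective_pairing (Cantor.of_nat p)), (surjective_pairing (Cantor.of_nat q)).
    f_equal; [exact Ek | exact (proj2 (proj2 (HT _)) _ _ _ Tp Tq)].
  - intro p; exists (fst (Cantor.of_nat p)); intros x [Qx _]; exact Qx.
Qed.

End Disjoint.

Definition Sigma0_OS_measurable {X Y : Type} (dX : X -> X -> R) (dY : Y -> Y -> R)
  (xi : Ord) (f : X -> Y) : Prop :=
  forall U, mopen dY U -> Sigma0 dX (OS xi) (fun x => U (f x)).

Section Measurable.
Context {X Y : Type} {dX : X -> X -> R} {dY : Y -> Y -> R}
  {HdX : is_metric dX} {HdY : is_metric dY}.

Lemma BaireClass_measurable (xi : Ord) (f : X -> Y) :
  BaireClass dX dY xi f -> Sigma0_OS_measurable dX dY xi f.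
Proof.
  induction 1 as [xi f H0 H1 H2 | xi eta fn f H0 H1 H2 H3 IH H4]; intros U HU.
  - apply Sigma0_mono with ord_two; [apply H2, HU | apply ord_le_OS_mono, H0].
  - assert (P : ord_lt OZ xi) by (apply ord_lt_trans with ord_one; auto using ord_lt0_one).
    (* f x lies in U iff, for some k and N, every f n x with n >= N has its 1/(k+1)-ball in U. *)
    set (V k n x := ball_in dY U k (fn n x)).
    apply Sigma0_ext with (fun x => exists p, forall n,
        (snd (Cantor.of_nat p) <= n)%nat -> V (fst (Cantor.of_nat p)) n x).
    + apply Sigma0_OS_union; auto; intro p; apply Pi0_countable_inter; auto; intro n.
      apply Pi0_guard; auto; apply Sigma0_mono with (OS (eta n)); [|apply H2].
      apply (IH n (fun y => ~ ball_in dY U (fst (Cantor.of_nat p)) y)), ball_in_closed.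
    + intro x; split.
      * intros [p Hp].
        destruct (H4 x _ (inv_INR_S_pos (fst (Cantor.of_nat p)))) as [N HN].
        apply (Hp (Nat.max N (snd (Cantor.of_nat p)))); [lia|]; apply HN; lia.
      * intro Ux; destruct (HU _ Ux) as [r [Hr Hr']].
        destruct (inv_INR_S_lt (r / 2)) as [k Hk]; [lra|].
        destruct (H4 x _ (inv_INR_S_pos k)) as [N HN].
        destruct (cantor_of_nat_surj (k, N)) as [p Hp]; exists p; rewrite Hp; cbn [fst snd].
        intros n Hn z Hz; apply Hr'; pose proof (HN n Hn).
        pose proof (metric_triangle (f x) (fn n x) z).
        rewrite (metric_sym (f x) (fn n x)) in *; lra.
Qed.

Lemma continuous_preimage_open (h : X -> Y) (U : Y -> Prop) :
  is_continuous dX dY h -> mopen dY U -> mopen dX (fun x => U (h x)).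
Proof.
  intros Hc HU x Ux; destruct (HU _ Ux) as [r [Hr Hr']].
  destruct (Hc x r Hr) as [s [Hs Hs']]; exists s; split; auto.
Qed.

Lemma piecewise_continuous_measurable (xi : Ord) (N : option nat) (C : nat -> X -> Prop)
  (g : X -> Y) :
  ord_lt OZ xi -> Pi_partition dX xi N C -> locally_on (is_continuous dX dY) N C g ->
  Sigma0_OS_measurable dX dY xi g.
Proof.
  intros P [_ [_ [HP [_ HC]]]] [gn Hg] U HU.
  set (piece n k x := in_index N n /\ C n x /\ ball_in dX (fun z => U (gn n z)) k x).
  apply Sigma0_ext with
    (fun x => exists p, piece (fst (Cantor.of_nat p)) (snd (Cantor.of_nat p)) x).
  - apply Sigma0_OS_union; auto; intro p; unfold piece.
    destruct (classic (in_index N (fst (Cantor.of_nat p)))) as [I|I].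
    + apply Pi0_ext with (fun x => C (fst (Cantor.of_nat p)) x /\
                          ball_in dX (fun z => U (gn (fst (Cantor.of_nat p)) z))
                                  (snd (Cantor.of_nat p)) x).
      * apply Pi0_inter2; [apply HP, I | apply Pi0_of_closed, ball_in_closed; auto].
      * intro x; tauto.
    + apply Pi0_ext with (fun _ => False); [apply Pi0_const, P | intro x; tauto].
  - intro x; split.
    + intros [p [I [Cx Hb]]]; rewrite (proj2 (Hg _ I) x Cx).
      apply Hb; rewrite metric_refl; apply inv_INR_S_pos.
    + intro Ux; destruct (HC x) as [n [I Cx]]; destruct (Hg _ I) as [Hc E].
      rewrite (E x Cx) in Ux.
      destruct (proj1 (open_ball_in _ (continuous_preimage_open _ _ Hc HU) x) Ux) as [k Hk].
      destruct (cantor_of_nat_surj (n, k)) as [p Hp].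
      exists p; rewrite Hp; repeat split; auto.
Qed.

Lemma uniform_limit_measurable (xi : Ord) (fk : nat -> X -> Y) (f : X -> Y) :
  ord_lt OZ xi -> uniform_cv dY fk f -> (forall k, Sigma0_OS_measurable dX dY xi (fk k)) ->
  Sigma0_OS_measurable dX dY xi f.
Proof.
  intros P Hu Hm U HU.
  destruct (choice (fun k N => forall n, (N <= n)%nat -> forall x,
                      dY (fk n x) (f x) < / INR (S k))) as [Nk HN].
  { intro k; apply Hu, inv_INR_S_pos. }
  (* f x lies in U iff, for some k, a ball of radius > 2/(k+1) around fk (Nk k) x lies in U. *)
  set (W k y := exists r, r > 2 * / INR (S k) /\ forall z, dY y z < r -> U z).
  apply Sigma0_ext with (fun x => exists k, W k (fk (Nk k) x)).
  - apply Sigma0_countable_union; [apply ord_lt_trans with xi; auto using ord_lt_OS|].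
    intro k; apply Hm; intros y [r [Hr Hr']].
    exists (r - 2 * / INR (S k)); split; [lra|].
    intros y' Hy'; exists (r - dY y y'); split; [lra|].
    intros z Hz; apply Hr'; pose proof (metric_triangle y y' z); lra.
  - intro x; split.
    + intros [k [r [Hr Hr']]]; apply Hr'.
      pose proof (HN k (Nk k) (le_n _) x); pose proof (inv_INR_S_pos k); lra.
    + intro Ux; destruct (HU _ Ux) as [r0 [Hr0 Hr0']].
      destruct (inv_INR_S_lt (r0 / 4)) as [k Hk]; [lra|].
      exists k, (3 * / INR (S k)); pose proof (inv_INR_S_pos k); split; [lra|].
      intros z Hz; apply Hr0'; pose proof (HN k (Nk k) (le_n _) x).
      pose proof (metric_triangle (f x) (fk (Nk k) x) z).
      rewrite (metric_sym (f x) (fk (Nk k) x)) in *; lra.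
Qed.

Lemma measurable_small_oscillation (xi : Ord) (f : X -> Y) (eps : R) :
  separable dX -> separable dY -> zero_dimensional dX -> ord_lt OZ xi ->
  Sigma0_OS_measurable dX dY xi f -> 0 < eps ->
  exists E, Pi0_decomposition dX xi E /\
    forall n x z, E n x -> E n z -> dY (f x) (f z) < eps.
Proof.
  intros HsX [s Hs] Hz P Hf He.
  set (Ball i y := exists c, s i = Some c /\ dY c y < eps / 2).
  destruct (choice (fun i (B : nat -> X -> Prop) => (forall n, Pi0 dX xi (B n)) /\
      forall x, Ball i (f x) <-> exists n, B n x)) as [B HB].
  { intro i; apply Sigma0_OS_inv; auto; apply Hf.
    intros y [c [E1 E2]]; exists (eps / 2 - dY c y); split; [lra|].
    intros y' Hy'; exists c; split; auto; pose proof (metric_triangle c y y'); lra. }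
  set (Q k := B (fst (Cantor.of_nat k)) (snd (Cantor.of_nat k))).
  destruct (Pi0_cover_refine xi Q HsX Hz P) as [E [HE HEQ]].
  - intro k; apply HB.
  - intro x; destruct (Hs (f x) (eps / 2)) as [i [c [E1 E2]]]; [lra|].
    destruct (proj1 (proj2 (HB i) x)) as [n Hn].
    { exists c; split; auto; rewrite metric_sym; auto. }
    destruct (cantor_of_nat_surj (i, n)) as [k Hk]; exists k; unfold Q; rewrite Hk; exact Hn.
  - exists E; split; auto; intros n x z Ex Ez.
    destruct (HEQ n) as [k Hk].
    assert (Hball : forall w, E n w -> Ball (fst (Cantor.of_nat k)) (f w)).
    { intros w Ew; apply HB; eexists; apply Hk, Ew. }
    destruct (Hball x Ex) as [c1 [F1 G1]], (Hball z Ez) as [c2 [F2 G2]].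
    rewrite F1 in F2; injection F2 as <-.
    pose proof (metric_triangle (f x) c1 (f z)); rewrite (metric_sym (f x) c1) in *; lra.
Qed.

End Measurable.

Lemma nat_downward_closed_index (P : nat -> Prop) :
  (forall n, P (S n) -> P n) -> exists N, forall n, in_index N n <-> P n.
Proof.
  intro Hdown; destruct (classic (forall n, P n)) as [H|H];
    [exists None; intro n; simpl; split; auto|].
  apply not_all_ex_not in H.
  destruct (nat_least_witness (fun n => ~ P n) H) as [T [HT Hmin]].
  exists (Some T); intro n; simpl; split.
  - intro Hn; apply NNPP, Hmin, Hn.
  - intro Pn; destruct (le_lt_dec T n) as [L|L]; auto; exfalso; apply HT.
    clear Hmin; induction L; auto.
Qed.

Section Reindex.
Context {X : Type} {d : X -> X -> R}.
Variables (xi : Ord) (E : nat -> X -> Prop).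

Fixpoint count_nonempty (m : nat) : nat :=
  match m with
  | O => O
  | S m => count_nonempty m + if excluded_middle_informative (exists x, E m x) then 1 else 0
  end%nat.

Lemma count_nonempty_mono (m m' : nat) :
  (m <= m')%nat -> (count_nonempty m <= count_nonempty m')%nat.
Proof. induction 1; auto; simpl; lia. Qed.

Lemma count_nonempty_S (m : nat) :
  (exists x, E m x) -> count_nonempty (S m) = S (count_nonempty m).
Proof. intro H; simpl; destruct (excluded_middle_informative _); [lia | contradiction]. Qed.

Lemma count_nonempty_inj (m m' : nat) : (exists x, E m x) -> (exists x, E m' x) ->
  count_nonempty m = count_nonempty m' -> m = m'.
Proof.
  intros A B H; destruct (lt_eq_lt_dec m m') as [[L|L]|L]; auto.
  - pose proof (count_nonempty_mono _ _ L); rewrite count_nonempty_S in *; auto; lia.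
  - pose proof (count_nonempty_mono _ _ L); rewrite count_nonempty_S in *; auto; lia.
Qed.

Lemma count_nonempty_hit (M n : nat) : (n < count_nonempty M)%nat ->
  exists m, (exists x, E m x) /\ count_nonempty m = n.
Proof.
  induction M as [|M IH]; simpl; intro H; [lia|].
  destruct (lt_dec n (count_nonempty M)) as [L|L]; auto.
  destruct (excluded_middle_informative _) as [A|A]; [|lia].
  exists M; split; auto; lia.
Qed.

Lemma Pi_partition_of_decomposition :
  Pi0_decomposition d xi E -> inhabited X ->
  exists N C, Pi_partition d xi N C /\
    forall n, in_index N n -> exists m, forall x, C n x <-> E m x.
Proof.
  intros [HP [Hcov Hdis]] [x0].
  destruct (nat_downward_closed_index (fun n => exists M, (n < count_nonempty M)%nat))
    as [N HN].
  { intros n [M HM]; exists M; lia. }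
  set (C n x := exists m, count_nonempty m = n /\ E m x).
  assert (HC : forall n, in_index N n -> exists m, forall x, C n x <-> E m x).
  { intros n In; apply HN in In as [M HM].
    destruct (count_nonempty_hit M n HM) as [m [Hm Hmn]].
    exists m; intro x; split; [|exists m; auto].
    intros [m' [H1 H2]]; replace m with m'; auto.
    apply count_nonempty_inj; eauto; congruence. }
  assert (Hin : forall m x, E m x -> in_index N (count_nonempty m)).
  { intros m x Ex; apply HN; exists (S m); rewrite count_nonempty_S; eauto. }
  exists N, C; split; auto; repeat split.
  - destruct (Hcov x0) as [m Hm]; apply HN; exists (S m); rewrite count_nonempty_S; eauto; lia.
  - intros n In; apply HN in In as [M HM].
    destruct (count_nonempty_hit M n HM) as [m [[x Hx] Hmn]]; exists x, m; auto.
  - intros n In; destruct (HC n In) as [m Hm]; apply Pi0_ext with (E m); auto.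
    intro x; rewrite Hm; tauto.
  - intros n m x _ _ [a [<- Ha]] [b [<- Hb]]; f_equal; eauto.
  - intro x; destruct (Hcov x) as [m Hm]; exists (count_nonempty m); split; eauto.
    exists m; auto.
Qed.

End Reindex.

Definition Delta0 {X : Type} (d : X -> X -> R) (z : Ord) (A : X -> Prop) : Prop :=
  Sigma0 d (OS z) A /\ Sigma0 d (OS z) (fun x => ~ A x).

Definition Delta0_fun {X S : Type} (d : X -> X -> R) (z : Ord) (h : X -> S) : Prop :=
  forall P : S -> Prop, Delta0 d z (fun x => P (h x)).

Fixpoint first_below (p : nat -> Prop) (r : nat) : option nat :=
  match r with
  | O => None
  | S r => match first_below p r with
           | Some c => Some c
           | None => if excluded_middle_informative (p r) then Some r else None
           end
  end.

Lemma first_below_Some (p : nat -> Prop) (r c : nat) : first_below p r = Some c -> p c.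
Proof.
  induction r as [|r IH]; simpl; [discriminate|].
  destruct (first_below p r); auto.
  destruct (excluded_middle_informative (p r)); [intros [= <-]; auto | discriminate].
Qed.

Lemma first_below_None (p : nat -> Prop) (r : nat) :
  (forall c, (c < r)%nat -> ~ p c) -> first_below p r = None.
Proof.
  induction r as [|r IH]; intro H; simpl; auto.
  rewrite IH by (intros c Hc; apply H; lia).
  destruct (excluded_middle_informative (p r)) as [Hp|]; auto; exfalso; exact (H r (le_n _) Hp).
Qed.

Lemma first_below_least (p : nat -> Prop) (r c : nat) : (c < r)%nat -> p c ->
  (forall c', (c' < c)%nat -> ~ p c') -> first_below p r = Some c.
Proof.
  induction r as [|r IH]; intros Hc Hp Hmin; [lia|]; simpl.
  destruct (Nat.eq_dec c r) as [->|Hne].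
  - rewrite first_below_None by exact Hmin.
    destruct (excluded_middle_informative (p r)); [reflexivity | contradiction].
  - rewrite IH; auto; lia.
Qed.

Lemma eventually_forall_lt (Q : nat -> nat -> Prop) (T : nat) :
  (forall c, (c < T)%nat -> exists M, forall m, (M <= m)%nat -> Q c m) ->
  exists M, forall m, (M <= m)%nat -> forall c, (c < T)%nat -> Q c m.
Proof.
  induction T as [|T IH]; intro H; [exists O; intros; lia|].
  destruct IH as [M1 H1]; [intros c Hc; apply H; lia|].
  destruct (H T (le_n _)) as [M2 H2]; exists (Nat.max M1 M2); intros m Hm c Hc.
  destruct (Nat.eq_dec c T) as [->|]; [apply H2 | apply H1]; lia.
Qed.

Section Delta.
Context {X : Type} {d : X -> X -> R} {Hd : is_metric d}.
Variable z : Ord.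
Hypothesis Hz : ord_lt OZ z.

Let Hz' : ord_lt OZ (OS z).
Proof. apply ord_lt_trans with z; auto using ord_lt_OS. Qed.

Lemma Delta0_ext (A B : X -> Prop) : Delta0 d z A -> (forall x, A x <-> B x) -> Delta0 d z B.
Proof.
  intros [H1 H2] E; split; [apply Sigma0_ext with A | apply Sigma0_ext with (fun x => ~ A x)];
    auto; intro x; rewrite E; tauto.
Qed.

Lemma Delta0_const (Q : Prop) : Delta0 d z (fun _ => Q).
Proof. split; apply Sigma0_const, Hz'. Qed.

Lemma Delta0_of_Sigma0 (A : X -> Prop) : Sigma0 d z A -> Delta0 d z A.
Proof.
  intro H; split.
  - apply Sigma0_mono with z; auto using ord_lt_le, ord_lt_OS.
  - apply Sigma0_OS_of_Pi0; auto; apply Sigma0_ext with A; auto; intro x; tauto.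
Qed.

Lemma Delta0_not (A : X -> Prop) : Delta0 d z A -> Delta0 d z (fun x => ~ A x).
Proof. intros [H1 H2]; split; auto; apply Sigma0_ext with A; auto; intro x; tauto. Qed.

Lemma Delta0_and (A B : X -> Prop) :
  Delta0 d z A -> Delta0 d z B -> Delta0 d z (fun x => A x /\ B x).
Proof.
  intros [A1 A2] [B1 B2]; split; [apply Sigma0_inter2; auto|].
  apply Sigma0_ext with (fun x => ~ A x \/ ~ B x); [apply Sigma0_union2; auto | intro x; tauto].
Qed.

Lemma Delta0_or (A B : X -> Prop) :
  Delta0 d z A -> Delta0 d z B -> Delta0 d z (fun x => A x \/ B x).
Proof.
  intros HA HB; apply Delta0_ext with (fun x => ~ (~ A x /\ ~ B x)); [|intro x; tauto].
  apply Delta0_not, Delta0_and; apply Delta0_not; auto.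
Qed.

Lemma Delta0_fun_const {S : Type} (s : S) : Delta0_fun d z (fun _ : X => s).
Proof. intro P; apply Delta0_const. Qed.

Lemma Delta0_fun_ite {S : Type} (A : X -> Prop) (h1 h2 : X -> S) :
  Delta0 d z A -> Delta0_fun d z h1 -> Delta0_fun d z h2 ->
  Delta0_fun d z (fun x => if excluded_middle_informative (A x) then h1 x else h2 x).
Proof.
  intros HA H1 H2 P.
  apply Delta0_ext with (fun x => (A x /\ P (h1 x)) \/ (~ A x /\ P (h2 x))).
  - apply Delta0_or; apply Delta0_and; auto using Delta0_not.
  - intro x; destruct (excluded_middle_informative (A x)); tauto.
Qed.

Lemma Delta0_fun_bind {S T : Type} (e : nat -> S) (h : X -> S) (k : S -> X -> T) :
  (forall s, exists n, e n = s) -> Delta0_fun d z h -> (forall s, Delta0_fun d z (k s)) ->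
  Delta0_fun d z (fun x => k (h x) x).
Proof.
  intros He Hh Hk P.
  (* The fibres of h partition X, so both the set and its complement are countable
     unions of Delta sets. *)
  assert (fibres : forall Q : T -> Prop,
             Sigma0 d (OS z) (fun x => exists n, h x = e n /\ Q (k (e n) x))).
  { intro Q; apply Sigma0_countable_union; auto; intro n.
    apply (Delta0_and (fun x => h x = e n) (fun x => Q (k (e n) x)));
      [apply (Hh (fun s => s = e n)) | apply Hk]. }
  assert (on_fibres : forall Q : T -> Prop,
             forall x, (exists n, h x = e n /\ Q (k (e n) x)) <-> Q (k (h x) x)).
  { intros Q x; split; [intros [n [<- Hx]]; exact Hx|].
    intro Hx; destruct (He (h x)) as [n Hn]; exists n; rewrite Hn; auto. }
  split; [apply Sigma0_ext with (fun x => exists n, h x = e n /\ P (k (e n) x))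
         |apply Sigma0_ext with (fun x => exists n, h x = e n /\ ~ P (k (e n) x))];
    [exact (fibres P) | exact (on_fibres P)
    |exact (fibres (fun t => ~ P t)) | exact (on_fibres (fun t => ~ P t))].
Qed.

Lemma Delta0_fun_first_below (p : nat -> X -> Prop) (r : nat) :
  (forall c, Delta0 d z (p c)) -> Delta0_fun d z (fun x => first_below (fun c => p c x) r).
Proof.
  intro Hp; induction r as [|r IH]; simpl; [apply Delta0_fun_const|].
  apply (Delta0_fun_bind (fun n => match n with O => None | S n => Some n end)
           (fun x => first_below (fun c => p c x) r)
           (fun o x => match o with
                       | Some c => Some c
                       | None => if excluded_middle_informative (p r x) then Some r else None
                       end)); auto.
  - intros [c|]; [exists (S c) | exists O]; auto.
  - intros [c|]; [apply Delta0_fun_const|].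
    apply Delta0_fun_ite; auto using Delta0_fun_const.
Qed.

End Delta.

Lemma Pi0_family_approx {X : Type} {d : X -> X -> R} {Hd : is_metric d}
  (xi : Ord) (A : nat -> X -> Prop) :
  ord_lt ord_one xi -> (forall p, Pi0 d xi (A p)) ->
  exists (theta : nat -> Ord) (approx : nat -> nat -> X -> Prop),
    (forall m, ord_lt (theta m) xi /\ ord_le ord_one (theta m)) /\
    (forall m p, Sigma0 d (theta m) (approx m p)) /\
    (forall m p x, A p x -> approx m p x) /\
    (forall p x, ~ A p x -> exists M, forall m, (M <= m)%nat -> ~ approx m p x).
Proof.
  intros Hxi HA.
  destruct (choice (fun p (q : (nat -> Ord) * (nat -> X -> Prop)) =>
      (forall j, ord_lt OZ (fst q j) /\ ord_lt (fst q j) xi) /\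
      (forall j, Sigma0 d (fst q j) (snd q j)) /\ forall x, A p x <-> forall j, snd q j x))
    as [q Hq].
  { intro p; destruct (Sigma0_inv _ _ Hxi (HA p)) as [eta [B [E1 [E2 E3]]]].
    exists (eta, B); split; [|split]; auto; intro x; split.
    - intros Ax j; apply NNPP; intro Nb; apply (proj2 (E3 x)); eauto.
    - intros Hj; apply NNPP; intro Nx; apply E3 in Nx as [j Nj]; exact (Nj (Hj j)). }
  set (eta i := fst (q (fst (Cantor.of_nat i))) (snd (Cantor.of_nat i))).
  set (B i := snd (q (fst (Cantor.of_nat i))) (snd (Cantor.of_nat i))).
  destruct (choice (fun m c => ord_lt c xi /\ ord_le ord_one c /\
                               forall i, (i <= m)%nat -> ord_le (eta i) c)) as [theta Htheta].
  { intro m; apply ord_lt_upper_bound; auto; intro i; apply Hq. }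
  exists theta, (fun m p x => forall i, (i <= m)%nat -> fst (Cantor.of_nat i) = p -> B i x).
  repeat split; try apply Htheta.
  - intros m p; assert (Hpos : ord_lt OZ (theta m))
      by (apply ord_lt_le_trans with ord_one; [apply ord_lt0_one | apply Htheta]).
    apply Sigma0_finite_inter; auto; intros i Hi; apply Sigma0_guard; auto.
    apply Sigma0_mono with (eta i); [apply Hq | apply Htheta, Hi].
  - intros m p x Ax i _ <-; apply (proj2 (proj2 (Hq _))), Ax.
  - intros p x Nx; rewrite (proj2 (proj2 (Hq p))) in Nx.
    apply not_all_ex_not in Nx as [j Nj].
    exists (Cantor.to_nat (p, j)); intros m Hm Hx; apply Nj.
    specialize (Hx _ Hm); unfold B in Hx; rewrite Cantor.cancel_of_to in Hx; apply Hx; auto.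
Qed.

Definition ancestor (d n : nat) : nat := Nat.iter d (fun n => fst (Cantor.of_nat n)) n.

Section Approximants.
Context {X Y : Type} {dX : X -> X -> R} {dY : Y -> Y -> R}
  {HdX : is_metric dX} {HdY : is_metric dY}.
Variables (xi : Ord) (f : X -> Y) (Pk : nat -> nat -> X -> Prop).
Hypothesis Hxi : ord_lt ord_one xi.
Hypothesis HPk : forall k, Pi0_decomposition dX xi (Pk k).
Hypothesis Hosc : forall k n x z, Pk k n x -> Pk k n z -> dY (f x) (f z) < / INR (S k).

(* The cells of level k form the common refinement of the first k partitions; the code n
   of a cell of level k+1 unpairs to (code of its parent, index of the piece of Pk k). *)
Fixpoint cell (k n : nat) : X -> Prop :=
  match k with
  | O => fun _ => n = O
  | S k => fun x => cell k (fst (Cantor.of_nat n)) x /\ Pk k (snd (Cantor.of_nat n)) x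
  end.

Lemma cell_Pi0 (k n : nat) : Pi0 dX xi (cell k n).
Proof.
  assert (P : ord_lt OZ xi) by (apply ord_lt_trans with ord_one; auto using ord_lt0_one).
  revert n; induction k as [|k IH]; intro n; simpl.
  - apply Pi0_const, P.
  - apply Pi0_inter2; [apply IH | apply HPk].
Qed.

Lemma cell_cover (k : nat) (x : X) : exists n, cell k n x.
Proof.
  induction k as [|k [n IH]]; simpl; [exists O; auto|].
  destruct (proj1 (proj2 (HPk k)) x) as [p Hp].
  destruct (cantor_of_nat_surj (n, p)) as [q Hq]; exists q; rewrite Hq; simpl; auto.
Qed.

Lemma cell_disjoint (k n n' : nat) (x : X) : cell k n x -> cell k n' x -> n = n'.
Proof.
  revert n n'; induction k as [|k IH]; simpl; intros n n' A B; [congruence|].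
  destruct A as [A1 A2], B as [B1 B2]; apply Cantor.of_nat_inj.
  rewrite (surjective_pairing (Cantor.of_nat n)), (surjective_pairing (Cantor.of_nat n')).
  f_equal; [eapply IH | eapply (proj2 (proj2 (HPk k)))]; eauto.
Qed.

Lemma cell_ancestor (k d n : nat) (x : X) : cell (k + d) n x -> cell k (ancestor d n) x.
Proof.
  revert n; induction d as [|d IH]; intros n H; [rewrite Nat.add_0_r in H; exact H|].
  unfold ancestor; rewrite Nat.iter_succ_r; apply IH.
  rewrite Nat.add_succ_r in H; apply H.
Qed.

Variables (theta : nat -> Ord) (approx : nat -> nat -> X -> Prop).
Hypothesis Htheta : forall m, ord_lt (theta m) xi /\ ord_le ord_one (theta m).
Hypothesis Happrox_Sigma0 : forall m p, Sigma0 dX (theta m) (approx m p).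
Hypothesis Happrox_cell : forall m k n x, cell k n x -> approx m (Cantor.to_nat (k, n)) x.
Hypothesis Happrox_eventually : forall k n x, ~ cell k n x ->
  exists M, forall m, (M <= m)%nat -> ~ approx m (Cantor.to_nat (k, n)) x.
Variable W : nat -> nat -> X.
Hypothesis HW : forall k n, (exists z, cell k n z) -> cell k n (W k n).

Lemma theta_pos (m : nat) : ord_lt OZ (theta m).
Proof. apply ord_lt_le_trans with ord_one; [apply ord_lt0_one | apply Htheta]. Qed.

Definition child (m k i c : nat) (x : X) : Prop :=
  fst (Cantor.of_nat c) = i /\ (exists z, cell (S k) c z) /\ approx m (Cantor.to_nat (S k, c)) x.

Definition descent_step (m : nat) (x : X) (s : nat * nat) : nat * nat :=
  match first_below (fun c => child m (fst s) (snd s) c x) (S m) with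
  | Some c => (S (fst s), c)
  | None => s
  end.

Definition approximant (m : nat) (x : X) : Y :=
  let s := Nat.iter m (descent_step m x) (O, O) in f (W (fst s) (snd s)).

Lemma descent_Delta0_fun (m t : nat) (s : nat * nat) :
  Delta0_fun dX (theta m) (fun x => Nat.iter t (descent_step m x) s).
Proof.
  pose proof (theta_pos m) as P.
  induction t as [|t IH]; simpl; [apply Delta0_fun_const; auto|].
  apply (Delta0_fun_bind (theta m) P Cantor.of_nat _ (fun s x => descent_step m x s));
    auto using cantor_of_nat_surj.
  intros s' Q.
  assert (Hfirst : Delta0_fun dX (theta m)
            (fun x => first_below (fun c => child m (fst s') (snd s') c x) (S m))).
  { apply Delta0_fun_first_below; auto; intro c.
    repeat apply Delta0_and; auto using Delta0_const, Delta0_of_Sigma0. }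
  exact (Hfirst (fun o => Q match o with Some c => (S (fst s'), c) | None => s' end)).
Qed.

Lemma approximant_measurable (m : nat) : Sigma0_OS_measurable dX dY (theta m) (approximant m).
Proof. intros U _; apply (descent_Delta0_fun m m (O, O) (fun s => U (f (W (fst s) (snd s))))). Qed.

Lemma descent_step_cases (m : nat) (x : X) (s : nat * nat) :
  descent_step m x s = s \/
  exists c, descent_step m x s = (S (fst s), c) /\ fst (Cantor.of_nat c) = snd s /\
            exists z, cell (S (fst s)) c z.
Proof.
  unfold descent_step; destruct (first_below _ (S m)) as [c|] eqn:E; auto.
  right; exists c; split; auto; apply first_below_Some in E; destruct E as [Ec [Hc _]]; auto.
Qed.

Lemma descent_stays_below (m : nat) (x : X) (s : nat * nat) :
  (exists z, cell (fst s) (snd s) z) -> forall r, exists d,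
    let s' := Nat.iter r (descent_step m x) s in
    fst s' = (fst s + d)%nat /\ ancestor d (snd s') = snd s /\ exists z, cell (fst s') (snd s') z.
Proof.
  intros Hs r; cbv zeta.
  induction r as [|r [d [D1 [D2 D3]]]]; [exists O; simpl; rewrite Nat.add_0_r; auto|].
  rewrite Nat.iter_succ; set (s' := Nat.iter r (descent_step m x) s) in *.
  destruct (descent_step_cases m x s') as [E|[c [E [Ec Hc]]]]; rewrite E; [exists d; auto|].
  exists (S d); cbn [fst snd]; repeat split; auto; [lia|].
  unfold ancestor in *; rewrite Nat.iter_succ_r, Ec; exact D2.
Qed.

Lemma descent_finds_cell (k n : nat) (x : X) : cell k n x ->
  exists M, forall m, (M <= m)%nat -> Nat.iter k (descent_step m x) (O, O) = (k, n) /\ (k <= m)%nat.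
Proof.
  revert n; induction k as [|k IH]; intros n Hn; [exists O; simpl in *; subst; split; auto; lia|].
  destruct Hn as [Hpar Hpiece].
  destruct (IH _ Hpar) as [M1 HM1].
  destruct (eventually_forall_lt (fun c m => ~ approx m (Cantor.to_nat (S k, c)) x) n)
    as [M2 HM2].
  { intros c Hc; apply Happrox_eventually; intro Cc.
    assert (c = n) by exact (cell_disjoint (S k) c n x Cc (conj Hpar Hpiece)); lia. }
  exists (Nat.max M1 (Nat.max M2 (S (n + k)))); intros m Hm.
  destruct (HM1 m ltac:(lia)) as [HI _]; split; [|lia].
  rewrite Nat.iter_succ, HI; unfold descent_step; cbn [fst snd].
  rewrite (first_below_least _ _ n); [reflexivity | lia | |].
  - repeat split; auto; [exists x; split; auto | apply Happrox_cell; split; auto].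
  - intros c Hc [_ [_ Hap]]; exact (HM2 m ltac:(lia) c Hc Hap).
Qed.

Lemma approximant_close (k n : nat) (x : X) : cell (S k) n x ->
  exists M, forall m, (M <= m)%nat -> dY (f x) (approximant m x) < / INR (S k).
Proof.
  intro Hx; destruct (descent_finds_cell _ _ _ Hx) as [M HM]; exists M; intros m Hm.
  destruct (HM m Hm) as [HI Hle].
  assert (Hsplit : Nat.iter m (descent_step m x) (O, O) =
                   Nat.iter (m - S k) (descent_step m x) (S k, n))
    by (rewrite <- HI, <- Nat.iter_add; f_equal; lia).
  unfold approximant; cbv zeta; rewrite Hsplit.
  destruct (descent_stays_below m x (S k, n) (ex_intro _ x Hx) (m - S k))
    as [d [D1 [D2 D3]]]; cbn [fst snd] in *.
  set (s' := Nat.iter (m - S k) (descent_step m x) (S k, n)) in *.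
  pose proof (HW _ _ D3) as Hw; rewrite D1 in *.
  apply (cell_ancestor (S k) d) in Hw; rewrite D2 in Hw.
  exact (Hosc k (snd (Cantor.of_nat n)) x _ (proj2 Hx) (proj2 Hw)).
Qed.

Lemma approximant_cv : pointwise_cv dY approximant f.
Proof.
  intros x e He; destruct (inv_INR_S_lt e He) as [k Hk].
  destruct (cell_cover (S k) x) as [n Hn]; destruct (approximant_close k n x Hn) as [M HM].
  exists M; intros m Hm; rewrite metric_sym; specialize (HM m Hm); lra.
Qed.

Lemma BaireClass_of_approximants :
  (forall m, Sigma0_OS_measurable dX dY (theta m) (approximant m) ->
             BaireClass dX dY (theta m) (approximant m)) ->
  BaireClass dX dY xi f.
Proof.
  intro IH; apply (Baire_lim dX dY xi theta approximant f Hxi theta_pos); [apply Htheta| |].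
  - intro m; apply IH, approximant_measurable.
  - exact approximant_cv.
Qed.

End Approximants.

Section Characterisation.
Context {X Y : Type} {dX : X -> X -> R} {dY : Y -> Y -> R}
  {HdX : is_metric dX} {HdY : is_metric dY}.
Hypotheses (HsX : separable dX) (HsY : separable dY) (Hz : zero_dimensional dX)
  (Hne : inhabited X).

Lemma measurable_BaireClass (xi : Ord) (f : X -> Y) :
  ord_lt OZ xi -> Sigma0_OS_measurable dX dY xi f -> BaireClass dX dY xi f.
Proof.
  revert f; induction xi as [xi IH] using (well_founded_induction ord_lt_wf); intros f P Hf.
  destruct (ord_le_or_lt xi ord_one) as [C|C].
  - apply Baire_one; auto; intros U HU.
    apply Sigma0_mono with (OS xi); [apply Hf, HU | apply ord_le_OS_mono, C].
  - destruct Hne as [x0].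
    destruct (choice (fun k E => Pi0_decomposition dX xi E /\
        forall n x z, E n x -> E n z -> dY (f x) (f z) < / INR (S k))) as [Pk HPk].
    { intro k; apply measurable_small_oscillation; auto using inv_INR_S_pos. }
    assert (HPi : forall k, Pi0_decomposition dX xi (Pk k)) by apply HPk.
    destruct (Pi0_family_approx xi
                (fun p => cell Pk (fst (Cantor.of_nat p)) (snd (Cantor.of_nat p))) C
                (fun p => cell_Pi0 xi Pk C HPi _ _)) as [theta [approx [Htheta [HS [Hsup Hev]]]]].
    destruct (choice (fun kn w => (exists z, cell Pk (fst kn) (snd kn) z) ->
                                  cell Pk (fst kn) (snd kn) w)) as [W HW].
    { intros [k n]; destruct (classic (exists z, cell Pk k n z)) as [[z Hz']|N];
        [exists z | exists x0]; tauto. }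
    apply (BaireClass_of_approximants xi f Pk C HPi (fun k => proj2 (HPk k)) theta approx Htheta HS)
      with (W := fun k n => W (k, n)).
    + intros m k n x Hx; apply Hsup; rewrite Cantor.cancel_of_to; exact Hx.
    + intros k n x Hx; apply Hev; rewrite Cantor.cancel_of_to; exact Hx.
    + intros k n; apply (HW (k, n)).
    + intros m; apply IH; [apply Htheta|].
      apply ord_lt_le_trans with ord_one; [apply ord_lt0_one | apply Htheta].
Qed.

Lemma measurable_unif_limit_piecewise_constant (xi : Ord) (f : X -> Y) :
  ord_lt OZ xi -> Sigma0_OS_measurable dX dY xi f ->
  unif_limit_piecewise dX dY xi is_constant f.
Proof.
  intros P Hf; destruct Hne as [x0].
  destruct (choice (fun k fk => (forall x, dY (fk x) (f x) < / INR (S k)) /\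
      exists N C, Pi_partition dX xi N C /\ locally_on is_constant N C fk)) as [fk Hfk].
  { intro k.
    destruct (measurable_small_oscillation xi f _ HsX HsY Hz P Hf (inv_INR_S_pos k))
      as [E [HE Hosc]].
    destruct (Pi_partition_of_decomposition xi E HE Hne) as [N [C [HC HCE]]].
    (* On each piece, f is replaced by its value at a chosen point of the piece. *)
    destruct (choice (fun m w => (exists z, E m z) -> E m w)) as [w Hw].
    { intro m; destruct (classic (exists z, E m z)) as [[z Hz']|Nz];
        [exists z | exists x0]; tauto. }
    destruct (choice (fun x m => E m x) (proj1 (proj2 HE))) as [idx Hidx].
    destruct (choice (fun n m => in_index N n -> forall x, C n x <-> E m x)) as [mC HmC].
    { intro n; destruct (classic (in_index N n)) as [I|I];
        [destruct (HCE n I) as [m Hm]; exists m | exists O]; tauto. }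
    exists (fun x => f (w (idx x))); split.
    - intro x; apply Hosc with (idx x); auto; apply Hw; exists x; auto.
    - exists N, C; split; auto; exists (fun n _ => f (w (mC n))); intros n I; split.
      + exists (f (w (mC n))); auto.
      + intros x Cx; do 2 f_equal.
        apply (proj2 (proj2 HE)) with x; auto; apply HmC; auto. }
  exists fk; split; [|intro k; apply Hfk].
  intros e He; destruct (inv_INR_S_lt e He) as [k Hk]; exists k; intros n Hn x.
  pose proof (proj1 (Hfk n) x); pose proof (inv_INR_S_le k n Hn); lra.
Qed.

Lemma unif_limit_piecewise_BaireClass (xi : Ord) (Pg : (X -> Y) -> Prop) (f : X -> Y) :
  ord_lt OZ xi -> (forall g, Pg g -> is_continuous dX dY g) ->
  unif_limit_piecewise dX dY xi Pg f -> BaireClass dX dY xi f.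
Proof.
  intros P Hcont [fk [Hu Hk]]; apply measurable_BaireClass; auto.
  apply (uniform_limit_measurable xi fk f P Hu); intro k.
  destruct (Hk k) as [N [C [HC [gn Hg]]]].
  apply (piecewise_continuous_measurable xi N C (fk k) P HC).
  exists gn; intros n I; destruct (Hg n I); split; auto.
Qed.

Lemma BaireClass_unif_limit_piecewise (xi : Ord) (Pg : (X -> Y) -> Prop) (f : X -> Y) :
  ord_lt OZ xi -> (forall g, is_constant g -> Pg g) ->
  BaireClass dX dY xi f -> unif_limit_piecewise dX dY xi Pg f.
Proof.
  intros P Hconst H.
  destruct (measurable_unif_limit_piecewise_constant xi f P (BaireClass_measurable xi f H))
    as [fk [Hu Hk]].
  exists fk; split; auto; intro k; destruct (Hk k) as [N [C [HC [gn Hg]]]].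
  exists N, C; split; auto; exists gn; intros n I; destruct (Hg n I); split; auto.
Qed.

End Characterisation.

Lemma constant_lipschitz {X Y : Type} (dX : X -> X -> R) (dY : Y -> Y -> R)
  {HdY : is_metric dY} (g : X -> Y) :
  is_constant g -> is_lipschitz dX dY g.
Proof.
  intros [y Hy]; exists 0; split; [lra|]; intros x x'.
  rewrite !Hy, metric_refl; lra.
Qed.

Lemma lipschitz_continuous {X Y : Type} (dX : X -> X -> R) (dY : Y -> Y -> R)
  {HdX : is_metric dX} (g : X -> Y) :
  is_lipschitz dX dY g -> is_continuous dX dY g.
Proof.
  intros [L [HL Hg]] x e He; exists (e / (L + 1)); split; [apply Rdiv_lt_0_compat; lra|].
  intros x' Hx'; specialize (Hg x x'); pose proof (metric_ge0 x x').
  assert (L * dX x x' <= L * (e / (L + 1))) by (apply Rmult_le_compat_l; lra).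
  assert (L * (e / (L + 1)) < e).
  { apply Rmult_lt_reg_r with (L + 1); [lra|].
    unfold Rdiv; replace (L * (e * / (L + 1)) * (L + 1)) with (L * e * ((L + 1) * / (L + 1)))
      by ring; rewrite Rinv_r by lra; nra. }
  lra.
Qed.

Theorem mainTheorem13 (X Y : Type) (dX : X -> X -> R) (dY : Y -> Y -> R)
  (HdX : is_metric dX) (HdY : is_metric dY)
  (HsX : separable dX) (HsY : separable dY)
  (Hzd : zero_dimensional dX) (Hne : inhabited X)
  (xi : Ord) (Hxi : ord_lt OZ xi) (f : X -> Y) :
  (BaireClass dX dY xi f <-> unif_limit_piecewise dX dY xi is_constant f) /\
  (BaireClass dX dY xi f <-> unif_limit_piecewise dX dY xi (is_lipschitz dX dY) f) /\
  (BaireClass dX dY xi f <-> unif_limit_piecewise dX dY xi (is_continuous dX dY) f).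
Proof.
  pose proof (constant_lipschitz dX dY) as const_lip.
  pose proof (lipschitz_continuous dX dY) as lip_cont.
  split; [|split]; split;
    solve [ apply BaireClass_unif_limit_piecewise; auto
          | apply unif_limit_piecewise_BaireClass; auto ].
Qed.
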